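(* Let $c>0$ and $\alpha,\beta\in\mathbb{R}$. For all $x\ge c$, $$\int_c^x\frac{dy}{y^{\alpha}(x+c-y)^{\beta}}=\Big\{\frac{1}{c(x+c)}\Big\}^{\alpha+\beta-1}\int_c^x (y+c)^{\alpha+\beta-2}\Big(\frac{c^{\alpha}}{y^{\alpha}}+\frac{c^{\beta}}{y^{\beta}}\Big)dy.$$ *)

From Stdlib Require Import Reals.
From Coquelicot Require Import Coquelicot.

(** Substituting [y = c (x + c) / (t + c)] maps [[c, x]] onto [[c, (x + c)/2]], and it
    turns [y^-a (x + c - y)^-b dy] into [(c (x + c))^(1-a-b) (t + c)^(a+b-2) c^b / t^b dt]
    (up to orientation).  So first fold the integral at the midpoint [(x + c)/2] using the
    reflection [y -> x + c - y]: this leaves the sum of the kernels with exponents [(a, b)]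
    and [(b, a)] on [[c, (x + c)/2]], whose images under the substitution are the two
    summands on the right-hand side. *)

From Stdlib Require Import Reals Lra.
From Coquelicot Require Import Coquelicot.
Open Scope R_scope.

(* The Coquelicot lemmas below are instantiated explicitly with the real line: leaving
   the module implicit makes canonical-structure inference diverge. *)

Lemma ex_RInt_continuous_le (f : R -> R) (a b : R) :
  a <= b -> (forall z, a <= z <= b -> continuous f z) -> ex_RInt f a b.
Proof.
intros hab hf. apply (@ex_RInt_continuous R_CompleteNormedModule).
rewrite Rmin_left, Rmax_right by lra. exact hf.
Qed.

Lemma continuous_reflect (f : R -> R) (s y : R) :
  continuous f (s - y) -> continuous (fun y => f (s - y)) y.
Proof.
intros hf. apply (@continuous_comp R_UniformSpace R_UniformSpace R_UniformSpace); auto.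
apply (@continuous_minus R_UniformSpace R_AbsRing R_NormedModule);
  [apply continuous_const | apply continuous_id].
Qed.

Lemma ex_RInt_reflect (f : R -> R) (s a b : R) :
  ex_RInt f a b -> ex_RInt (fun y => f (s - y)) (s - b) (s - a).
Proof.
intros hf. apply (@ex_RInt_swap R_NormedModule).
assert (hlin := @ex_RInt_comp_lin R_NormedModule f (-1) s (s - a) (s - b)).
replace (-1 * (s - a) + s) with a in hlin by ring.
replace (-1 * (s - b) + s) with b in hlin by ring.
apply (@ex_RInt_ext R_NormedModule (fun y => opp (scal (-1) (f (-1 * y + s))))).
- intros y _. unfold scal, opp; simpl; unfold mult; simpl.
  replace (-1 * y + s) with (s - y) by ring. ring.
- apply (@ex_RInt_opp R_NormedModule), hlin, hf.
Qed.

Lemma RInt_reflect (f : R -> R) (s a b : R) :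
  ex_RInt f a b -> RInt (fun y => f (s - y)) (s - b) (s - a) = RInt f a b.
Proof.
intros hf.
assert (hg : ex_RInt (fun y => f (s - y)) (s - a) (s - b)).
{ apply (@ex_RInt_swap R_NormedModule), ex_RInt_reflect, hf. }
assert (hlin := @RInt_comp_lin R_CompleteNormedModule f (-1) s (s - a) (s - b)).
replace (-1 * (s - a) + s) with a in hlin by ring.
replace (-1 * (s - b) + s) with b in hlin by ring.
rewrite <- (hlin hf), <- (@opp_RInt_swap R_CompleteNormedModule _ _ _ hg),
  <- (@RInt_opp R_CompleteNormedModule _ _ _ hg).
apply (@RInt_ext R_CompleteNormedModule). intros y _.
unfold scal, opp; simpl; unfold mult; simpl.
replace (-1 * y + s) with (s - y) by ring. ring.
Qed.

Lemma RInt_fold_midpoint (f : R -> R) (a b : R) :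
  a <= b -> ex_RInt f a b ->
  RInt f a b = RInt (fun y => f y + f (a + b - y)) a ((a + b) / 2).
Proof.
intros hab hf. set (m := (a + b) / 2).
assert (hm : a <= m <= b) by (unfold m; lra).
assert (hf1 : ex_RInt f a m).
{ apply (@ex_RInt_Chasles_1 R_CompleteNormedModule f a m b); auto. }
assert (hf2 : ex_RInt f m b).
{ apply (@ex_RInt_Chasles_2 R_CompleteNormedModule f a m b); auto. }
assert (hrefl := RInt_reflect f (a + b) m b hf2).
assert (hrefl_ex := ex_RInt_reflect f (a + b) m b hf2).
replace (a + b - b) with a in hrefl, hrefl_ex by ring.
replace (a + b - m) with m in hrefl, hrefl_ex by (unfold m; field).
rewrite <- (@RInt_Chasles R_CompleteNormedModule f a m b hf1 hf2), <- hrefl.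
symmetry. exact (@RInt_plus R_CompleteNormedModule f _ a m hf1 hrefl_ex).
Qed.

Lemma RInt_comp_moebius (h : R -> R) (p c a b : R) :
  0 <= p -> 0 < a + c -> a <= b ->
  (forall y, p / (b + c) <= y <= p / (a + c) -> continuous h y) ->
  RInt h (p / (b + c)) (p / (a + c)) =
  RInt (fun t => p / (t + c) ^ 2 * h (p / (t + c))) a b.
Proof.
intros hp hac hab hh.
set (g := fun t => p / (t + c)).
set (dg := fun t => - (p / (t + c) ^ 2)).
assert (hrange : forall t, a <= t <= b -> g b <= g t <= g a).
{ intros t ht. unfold g, Rdiv.
  split; apply Rmult_le_compat_l; auto; apply Rinv_le_contravar; lra. }
assert (hderiv : forall t, a <= t <= b -> is_derive g t (dg t) /\ continuous dg t).
{ intros t ht. split.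
  - unfold g, dg. auto_derive; [lra | field; lra].
  - apply (@ex_derive_continuous R_AbsRing R_NormedModule). unfold dg. auto_derive. nra. }
assert (hh_ex : ex_RInt h (g a) (g b)).
{ destruct (hrange a) as [hba _]; [lra |].
  apply (@ex_RInt_swap R_NormedModule), ex_RInt_continuous_le; auto. }
assert (hcomp_ex : ex_RInt (fun t => scal (dg t) (h (g t))) a b).
{ apply ex_RInt_continuous_le; auto. intros t ht.
  destruct (hderiv t ht) as [hg hdg].
  apply (@continuous_scal R_UniformSpace R_AbsRing R_NormedModule); auto.
  apply (@continuous_comp R_UniformSpace R_UniformSpace R_UniformSpace).
  - apply (@ex_derive_continuous R_AbsRing R_NormedModule). exists (dg t). exact hg.
  - apply hh, hrange, ht. }
assert (hcomp := @RInt_comp R_CompleteNormedModule h g dg a b).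
rewrite Rmin_left, Rmax_right in hcomp by lra.
change (RInt h (g b) (g a) = RInt (fun t => p / (t + c) ^ 2 * h (g t)) a b).
rewrite <- (@opp_RInt_swap R_CompleteNormedModule _ _ _ hh_ex), <- hcomp;
  [| intros t ht; apply hh, hrange, ht | exact hderiv].
rewrite <- (@RInt_opp R_CompleteNormedModule) by exact hcomp_ex.
apply (@RInt_ext R_CompleteNormedModule). intros t _.
unfold scal, opp, g, dg; simpl; unfold mult; simpl. ring.
Qed.

Lemma Rpower_moebius_kernel (c s t a b : R) : 0 < c -> 0 < s -> 0 < t ->
  c * s / (t + c) ^ 2 / (Rpower (c * s / (t + c)) a * Rpower (s - c * s / (t + c)) b) =
  Rpower (/ (c * s)) (a + b - 1) * Rpower (t + c) (a + b - 2) * (Rpower c b / Rpower t b).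
Proof.
intros hc hs ht. set (u := c * s / (t + c)).
assert (htc : 0 < t + c) by lra.
assert (ln_u : ln u = ln c + ln s - ln (t + c)).
{ unfold u. rewrite ln_div, ln_mult; try lra. nra. }
assert (ln_su : ln (s - u) = ln s + ln t - ln (t + c)).
{ replace (s - u) with (s * t / (t + c)) by (unfold u; field; lra).
  rewrite ln_div, ln_mult; try lra. nra. }
assert (ln_cs : ln (/ (c * s)) = - (ln c + ln s)).
{ rewrite ln_Rinv, ln_mult; try lra. nra. }
assert (weight : c * s / (t + c) ^ 2 = exp (ln c + ln s - 2 * ln (t + c))).
{ unfold Rminus. rewrite !exp_plus, exp_Ropp, !exp_ln by lra.
  replace 2 with (INR 2) by (simpl; ring).
  rewrite <- ln_pow, exp_ln by (try apply pow_lt; lra).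
  simpl. field. lra. }
rewrite weight. unfold Rpower. rewrite ln_u, ln_su, ln_cs. unfold Rdiv.
repeat rewrite <- ?exp_Ropp, <- ?exp_plus.
f_equal; ring.
Qed.

Lemma Rpower_moebius_kernel_sum (c s t a b : R) : 0 < c -> 0 < s -> 0 < t ->
  let u := c * s / (t + c) in
  c * s / (t + c) ^ 2 *
  (/ (Rpower u a * Rpower (s - u) b) + / (Rpower (s - u) a * Rpower u b)) =
  Rpower (/ (c * s)) (a + b - 1) *
  (Rpower (t + c) (a + b - 2) * (Rpower c a / Rpower t a + Rpower c b / Rpower t b)).
Proof.
intros hc hs ht u.
assert (hab := Rpower_moebius_kernel c s t a b hc hs ht).
assert (hba := Rpower_moebius_kernel c s t b a hc hs ht).
rewrite (Rplus_comm b a) in hba. fold u in hab, hba.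
rewrite Rmult_plus_distr_l, (Rmult_comm (Rpower (s - u) a)).
unfold Rdiv in hab, hba |- *. rewrite hab, hba. ring.
Qed.

Lemma continuous_Rpower_kernel (a b s y : R) :
  0 < y < s -> continuous (fun y => / (Rpower y a * Rpower (s - y) b)) y.
Proof.
intros hy. apply (@ex_derive_continuous R_AbsRing R_NormedModule).
unfold Rpower. auto_derive.
repeat split; try lra; apply Rgt_not_eq, Rmult_lt_0_compat; apply exp_pos.
Qed.

Lemma continuous_Rpower_ratio_sum (c k a b y : R) : 0 < c -> 0 < y ->
  continuous (fun y => Rpower (y + c) k *
                       (Rpower c a / Rpower y a + Rpower c b / Rpower y b)) y.
Proof.
intros hc hy. apply (@ex_derive_continuous R_AbsRing R_NormedModule).
unfold Rpower. auto_derive.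
repeat split; try lra; apply Rgt_not_eq, exp_pos.
Qed.

Theorem lemmaA1 (c alpha beta x : R) (hc : 0 < c) (hx : c <= x) :
  RInt (fun y => / (Rpower y alpha * Rpower (x + c - y) beta)) c x =
  Rpower (/ (c * (x + c))) (alpha + beta - 1) *
  RInt (fun y => Rpower (y + c) (alpha + beta - 2) *
                 (Rpower c alpha / Rpower y alpha + Rpower c beta / Rpower y beta)) c x.
Proof.
set (F := fun y => / (Rpower y alpha * Rpower (x + c - y) beta)).
assert (hF : forall y, c <= y <= x -> continuous F y).
{ intros y hy. apply continuous_Rpower_kernel. lra. }
assert (hsub := RInt_comp_moebius (fun y => F y + F (c + x - y)) (c * (x + c)) c c x).
replace (c * (x + c) / (x + c)) with c in hsub by (field; lra).
replace (c * (x + c) / (c + c)) with ((c + x) / 2) in hsub by (field; lra).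
rewrite (RInt_fold_midpoint F c x hx (ex_RInt_continuous_le F c x hx hF)), hsub;
  [| nra | lra | exact hx |].
- rewrite <- (@RInt_scal R_CompleteNormedModule).
  + apply (@RInt_ext R_CompleteNormedModule).
    rewrite Rmin_left, Rmax_right by lra. intros t ht.
    unfold F, scal; simpl; unfold mult; simpl.
    replace (x + c - (c + x - c * (x + c) / (t + c))) with (c * (x + c) / (t + c)) by ring.
    replace (c + x - c * (x + c) / (t + c)) with (x + c - c * (x + c) / (t + c)) by ring.
    apply Rpower_moebius_kernel_sum; lra.
  + apply ex_RInt_continuous_le; auto.
    intros y hy. apply continuous_Rpower_ratio_sum; lra.
- intros y hy. apply (@continuous_plus R_UniformSpace R_AbsRing R_NormedModule).
  + apply hF. lra.
  + apply continuous_reflect, hF. lra.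
Qed.
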